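(* Let $T$ be a tree with diameter $d$, and let $k$ be an integer with $1\le k\le d-1$. Then the $k$th power $T^k$ contains a $(k+1)^+$-branching spanning tree.
   Context: All graphs are finite, simple, undirected. In a tree, vertices of degree $1$ are leaves and all other vertices are internal vertices. For an integer $m$, a tree is $m^+$-branching if every internal vertex has degree at least $m$. For a graph $G=(V,E)$ and $k\in\mathbb{N}$, the $k$th power $G^k$ is the graph on vertex set $V$ in which $u\ne v$ are adjacent iff $d_G(u,v)\le k$ (distance in $G$). The diameter is the maximum distance between two vertices. *)

(* A finite simple graph on a finite vertex type V is a
   symmetric irreflexive relation e : rel V; the vertex set is all of V. *)
From mathcomp Require Import all_boot.
Set Implicit Arguments. Unset Strict Implicit. Unset Printing Implicit Defensive.

Section Graphs.
Variable V : finType.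

Definition simple_graph (e : rel V) : Prop := symmetric e /\ irreflexive e.

Definition dist_le (e : rel V) (n : nat) (x y : V) : Prop :=
  exists p : seq V, [/\ path e x p, last x p = y & size p <= n].

Definition is_dist (e : rel V) (x y : V) (n : nat) : Prop :=
  dist_le e n x y /\ forall m, dist_le e m x y -> n <= m.

Definition connected_graph (e : rel V) : Prop :=
  forall x y : V, exists n, dist_le e n x y.

Definition acyclic (e : rel V) : Prop :=
  forall c : seq V, 3 <= size c -> uniq c -> ~~ cycle e c.

Definition is_tree (e : rel V) : Prop :=
  simple_graph e /\ connected_graph e /\ acyclic e.

Definition diameter_is (e : rel V) (d : nat) : Prop :=
  (forall x y, exists n, is_dist e x y n /\ n <= d) /\
  (exists x y, is_dist e x y d).

Definition deg (e : rel V) (x : V) : nat := #|[set y | e x y]|.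

Definition is_leaf (e : rel V) (x : V) : bool := deg e x == 1.

Definition branching_plus (m : nat) (e : rel V) : Prop :=
  forall x, ~~ is_leaf e x -> m <= deg e x.

Definition power_adj (e : rel V) (k : nat) (x y : V) : Prop :=
  x != y /\ dist_le e k x y.

Definition spanning_tree_of (G : V -> V -> Prop) (f : rel V) : Prop :=
  is_tree f /\ forall x y, f x y -> G x y.

End Graphs.

(* Root the tree at one end [r] of a diametral path from [r] to [y]. Working up from the
   leaves, declare a non-root vertex a hub as soon as the part of its subtree not yet covered
   by hubs below it reaches height [k]. Then every vertex with a hub ancestor is within [k]
   of the nearest one, and every hub has, for each [i <= k], a descendant at distance [i]
   whose nearest hub ancestor it is. Join each vertex to its nearest hub ancestor, and the
   vertices without one to [top_hub], the hub of the diametral path closest to [r]; because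
   the path to [y] is longest, these vertices lie within [k] of [top_hub]. This is a tree of
   [T^k] in which non-hubs are leaves and each hub has its [k] chosen descendants plus one
   more neighbour: its own nearest hub ancestor, or [r] for [top_hub]. *)

From mathcomp Require Import all_boot zify.
From Stdlib Require Import ClassicalEpsilon.
Set Implicit Arguments. Unset Strict Implicit. Unset Printing Implicit Defensive.

Lemma belast_traject (T : Type) (f : T -> T) x n :
  belast x (traject f (f x) n) = traject f x n.
Proof. by elim: n x => //= n IHn x; rewrite IHn. Qed.

Section Walks.
Variables (V : finType) (e : rel V).

Lemma dist_le_refl x : dist_le e 0 x x.
Proof. by exists [::]. Qed.

Lemma dist_le0 x y : dist_le e 0 x y -> x = y.
Proof. by case=> [[|? ?] []]. Qed.

Lemma dist_le_leq m n x y : m <= n -> dist_le e m x y -> dist_le e n x y.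
Proof. by move=> lemn [p [ep py sp]]; exists p; split=> //; apply: leq_trans lemn. Qed.

Lemma dist_le_cat m n x y z :
  dist_le e m x y -> dist_le e n y z -> dist_le e (m + n) x z.
Proof.
move=> [p [ep py sp]] [q [eq qz sq]]; exists (p ++ q).
by rewrite cat_path last_cat py ep eq size_cat leq_add.
Qed.

Lemma dist_le_edge x y : e x y -> dist_le e 1 x y.
Proof. by exists [:: y]; rewrite /= andbT. Qed.

Lemma dist_le_cons n x y z : e x y -> dist_le e n y z -> dist_le e n.+1 x z.
Proof. by move/dist_le_edge/dist_le_cat; apply. Qed.

Lemma dist_le_nonadj n x y : dist_le e n x y -> x != y -> ~~ e x y -> 1 < n.
Proof.
case=> [[|a [|b p]] [/= ep <- sp]] //; first by rewrite eqxx.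
- by rewrite andbT in ep; rewrite ep.
- by move=> _ _; apply: leq_ltn_trans sp.
Qed.

Hypothesis e_sym : symmetric e.

Lemma dist_le_sym n x y : dist_le e n x y -> dist_le e n y x.
Proof.
case=> p [ep <- sp]; exists (rev (belast x p)).
have revp : last x p :: rev (belast x p) = rev (x :: p) by rewrite [x :: p]lastI rev_rcons.
rewrite rev_path (eq_path (e' := e)) // size_rev size_belast.
by rewrite -[last _ (rev _)]/(last x (last x p :: rev (belast x p))) revp rev_cons last_rcons.
Qed.

Lemma cycle_join x y p q : e y x -> path e x p -> path e y q ->
  last x p = last y q -> cycle e (x :: p ++ rev (belast y q)).
Proof.
move=> eyx ep eq pq; rewrite /= rcons_cat cat_path ep /= pq -rev_cons.
rewrite -[x :: _]/(belast x (y :: q)) -[last y q]/(last x (y :: q)).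
by rewrite rev_path (eq_path (e' := e)) //= e_sym eyx.
Qed.

End Walks.

Lemma deg_ge_uniq (V : finType) (g : rel V) x s :
  uniq s -> {in s, forall z, g x z} -> size s <= deg g x.
Proof.
move=> us gs; rewrite /deg -(card_uniqP us); apply: subset_leq_card.
by apply/subsetP => z zs; rewrite inE gs.
Qed.

Section ParentGraph.
Variables (V : finType) (up : V -> V) (root : V) (rank : V -> nat).
Hypothesis up_root : up root = root.
Hypothesis rank_up : forall x, x != root -> rank (up x) < rank x.

Definition parent_graph : rel V := fun x y => (x != y) && ((up x == y) || (up y == x)).

Lemma up_neq x : x != root -> up x != x.
Proof. by move=> xr; apply/eqP => px; have := rank_up xr; rewrite px ltnn. Qed.

Lemma up_up x : up (up x) = x -> up x = x.
Proof.
case: (eqVneq x root) => [->|xr]; first by rewrite up_root.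
case: (eqVneq (up x) root) => [pr|pr]; first by rewrite pr up_root => <-.
by move=> ppx; have := ltn_trans (rank_up pr) (rank_up xr); rewrite ppx ltnn.
Qed.

Lemma parent_graph_sym : symmetric parent_graph.
Proof. by move=> x y; rewrite /parent_graph eq_sym orbC. Qed.

Lemma parent_graph_irr : irreflexive parent_graph.
Proof. by move=> x; rewrite /parent_graph eqxx. Qed.

Lemma parent_graph_up x : x != root -> parent_graph x (up x).
Proof. by move=> xr; rewrite /parent_graph eq_sym up_neq // eqxx. Qed.

Lemma parent_graph_child x z : z != x -> up z = x -> parent_graph x z.
Proof. by move=> zx pz; rewrite /parent_graph eq_sym zx pz eqxx orbT. Qed.

Lemma parent_graph_rank_le x y : parent_graph x y -> rank y <= rank x -> up x = y.
Proof.
case/andP=> xy /orP[/eqP // | /eqP py] ryx.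
case: (eqVneq y root) => [yr|yr]; first by rewrite -py yr up_root eqxx in xy.
by have := rank_up yr; rewrite py ltnNge ryx.
Qed.

Lemma parent_graph_connected : connected_graph parent_graph.
Proof.
have to_root n x : rank x <= n -> exists l, dist_le parent_graph l x root.
  elim: n x => [|n IHn] x rx; case: (eqVneq x root) => [->|xr];
    try by exists 0; apply: dist_le_refl.
    by have := rank_up xr; rewrite ltnNge (leq_trans rx).
  have [l pl] := IHn (up x) (leq_trans (rank_up xr) rx).
  by exists l.+1; apply: dist_le_cons pl; apply: parent_graph_up.
move=> x y; have [l xr] := to_root _ x (leqnn _); have [l' yr] := to_root _ y (leqnn _).
by exists (l + l'); apply: dist_le_cat xr (dist_le_sym parent_graph_sym yr).
Qed.

(* On a cycle, both neighbours of a vertex of maximal rank would be its parent. *)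
Lemma parent_graph_acyclic : acyclic parent_graph.
Proof.
move=> [//|x0 c'] c3 cu; apply/negP => cc; set c := x0 :: c' in c3 cu cc.
have [z zc zmax] := @arg_maxnP _ x0 (fun w => w \in c) rank (mem_head _ _).
case: (rot_to zc) => i s crot.
have sc : cycle parent_graph (z :: s) by rewrite -crot rot_cycle.
have su : uniq (z :: s) by rewrite -crot rot_uniq.
have s3 : 2 < size (z :: s) by rewrite -crot size_rot.
have sub w : w \in z :: s -> rank w <= rank z.
  by move=> ws; apply: zmax; rewrite -(mem_rot i) crot.
clear crot.
case/lastP: s s3 su sc sub => [|[|a s] b] //= s3 su.
rewrite rcons_path last_rcons => /andP[za /andP[_ bz]] sub.
have ra : rank a <= rank z by apply: sub; rewrite !inE eqxx orbT.
have rb : rank b <= rank z by apply: sub; rewrite !inE mem_rcons inE eqxx !orbT.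
have zb : parent_graph z b by rewrite parent_graph_sym.
move: su; rewrite -(parent_graph_rank_le za ra) (parent_graph_rank_le zb rb).
by rewrite mem_rcons inE eqxx andbF.
Qed.

Lemma parent_graph_tree : is_tree parent_graph.
Proof.
split; first by split; [apply: parent_graph_sym | apply: parent_graph_irr].
by split; [apply: parent_graph_connected | apply: parent_graph_acyclic].
Qed.

Lemma parent_graph_leaf x : x != root -> (forall z, up z != x) -> is_leaf parent_graph x.
Proof.
move=> xr nochild; rewrite /is_leaf /deg.
suff -> : [set y | parent_graph x y] = [set up x] by rewrite cards1.
apply/setP => z; rewrite !inE /parent_graph (negbTE (nochild z)) orbF.
by case: (eqVneq (up x) z) => [<-|]; rewrite ?andbF // eq_sym up_neq.
Qed.
End ParentGraph.

Section RootedTree.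
Variables (V : finType) (e : rel V) (r : V).
Hypotheses (e_sym : symmetric e) (e_irr : irreflexive e).
Hypotheses (e_conn : connected_graph e) (e_acyc : acyclic e).

Definition dist_leb n x y : bool :=
  if excluded_middle_informative (dist_le e n x y) then true else false.

Lemma dist_lebP n x y : reflect (dist_le e n x y) (dist_leb n x y).
Proof. by rewrite /dist_leb; case: excluded_middle_informative; constructor. Qed.

Lemma exists_dist_leb x : exists n, dist_leb n r x.
Proof. by have [n rx] := e_conn r x; exists n; apply/dist_lebP. Qed.

Definition depth x := ex_minn (exists_dist_leb x).

Lemma dist_le_depth x : dist_le e (depth x) r x.
Proof. by rewrite /depth; case: ex_minnP => n /dist_lebP. Qed.

Lemma depth_min x n : dist_le e n r x -> depth x <= n.
Proof. by rewrite /depth; case: ex_minnP => m _ + /dist_lebP; apply. Qed.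

Lemma depth_dist_le n x y : dist_le e n x y -> depth y <= depth x + n.
Proof. by move=> xy; apply: depth_min; apply: dist_le_cat (dist_le_depth x) xy. Qed.

Lemma depth_dist_le_sym n x y : dist_le e n x y -> depth x <= depth y + n.
Proof. by move/(dist_le_sym e_sym); apply: depth_dist_le. Qed.

Lemma depth_eq0 x : (depth x == 0) = (x == r).
Proof.
apply/eqP/eqP => [d0 | ->]; first by have := dist_le_depth x; rewrite d0 => /dist_le0.
by apply/eqP; rewrite -leqn0; apply/depth_min/dist_le_refl.
Qed.

Lemma depth_root : depth r = 0.
Proof. by apply/eqP; rewrite depth_eq0. Qed.

Definition par x := odflt x [pick w | e w x && (depth w == (depth x).-1)].

Lemma par_spec x : x != r -> e (par x) x /\ depth x = (depth (par x)).+1.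
Proof.
move=> xr.
have [w wx dw] : exists2 w, e w x & depth w = (depth x).-1.
  have [p [rp px sp]] := dist_le_depth x; move: rp px sp.
  case/lastP: p => [_ /= rx|p w]; first by rewrite rx eqxx in xr.
  rewrite rcons_path last_rcons size_rcons => /andP[rp pw] <- sp.
  exists (last r p) => //.
  have := depth_min (ex_intro _ p (And3 rp erefl (leqnn _))).
  have := depth_dist_le (dist_le_edge pw); lia.
rewrite /par; case: pickP => [w' /andP[w'x /eqP dw'] | /(_ w)]; last first.
  by rewrite /= wx dw eqxx.
by split=> //; move: xr; rewrite -depth_eq0 dw'; case: (depth x).
Qed.

Lemma par_root : par r = r.
Proof.
rewrite /par; case: pickP => [w /andP[wr /eqP]|] //=.
by rewrite depth_root => /eqP; rewrite depth_eq0 => /eqP w_r; rewrite w_r e_irr in wr.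
Qed.

Lemma depth_par x : depth (par x) = (depth x).-1.
Proof.
case: (eqVneq x r) => [->|xr]; first by rewrite par_root depth_root.
by have [_ ->] := par_spec xr.
Qed.

Lemma depth_iter_par i x : depth (iter i par x) = depth x - i.
Proof. by elim: i => [|i IHi]; rewrite ?subn0 //= depth_par IHi subnS. Qed.

Lemma iter_par_depth x : iter (depth x) par x = r.
Proof. by apply/eqP; rewrite -depth_eq0 depth_iter_par subnn. Qed.

Lemma iter_par_inj x i j : i <= depth x -> j <= depth x ->
  iter i par x = iter j par x -> i = j.
Proof. by move=> ix jx /(congr1 depth); rewrite !depth_iter_par; lia. Qed.

Lemma dist_le_iter_par i x : dist_le e i (iter i par x) x.
Proof.
elim: i => [|i IHi]; first exact: dist_le_refl.
rewrite iterS; case: (eqVneq (iter i par x) r) => [ir|ir].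
  by rewrite ir par_root -ir; apply: dist_le_leq (leqnSn i) _.
by apply: dist_le_cons IHi; apply: (par_spec ir).1.
Qed.

Lemma path_par x i : i <= depth x -> path e x (traject par (par x) i).
Proof.
elim: i x => [|i IHi] x //= ix.
have xr : x != r by rewrite -depth_eq0; case: (depth x) ix.
by rewrite e_sym (par_spec xr).1 IHi // depth_par; case: (depth x) ix.
Qed.

Lemma traject_par_uniq x n : n <= (depth x).+1 -> uniq (traject par x n).
Proof.
elim: n x => [|n IHn] x //= nx; rewrite IHn ?depth_par; last lia.
rewrite andbT; apply/trajectP => -[i ni /(congr1 depth)].
by rewrite -iterSr depth_iter_par; lia.
Qed.

Lemma edge_iter_par a b j : e a b -> iter j par b = a -> j <= depth b ->
  (b != r) && (par b == a).
Proof.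
move=> ab ba jb.
have := depth_dist_le (dist_le_edge ab); rewrite -ba depth_iter_par => dj.
case: j ba jb dj => [|[|j]] /= ba jb dj; last lia.
  by move: ab; rewrite -ba e_irr.
rewrite eqxx andbT; apply: contraTneq ab => br.
by rewrite -ba br par_root e_irr.
Qed.

(* Otherwise the ancestor paths of [a] and [b] up to their first common vertex, closed by
   the edge, would form a cycle. *)
Lemma edge_parent a b : e a b -> (a != r) && (par a == b) || (b != r) && (par b == a).
Proof.
move=> ab; pose meets i := iter i par a \in traject par b (depth b).+1.
have meets_depth : meets (depth a).
  by apply/trajectP; exists (depth b); rewrite ?iter_par_depth.
have [i /trajectP[j jb ij] imin] := ex_minnP (ex_intro meets _ meets_depth).
have ia : i <= depth a := imin _ meets_depth.
case: i ij ia imin => [|i] ij ia imin.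
  by rewrite (edge_iter_par ab (esym ij)) ?orbT.
have ba : e b a by rewrite e_sym.
case: j jb ij => [|j] jb ij; first by rewrite (edge_iter_par ba ij).
set c := traject par a i.+2 ++ rev (traject par b j.+1).
have c3 : 2 < size c by rewrite size_cat size_rev !size_traject addnS.
have cc : cycle e c.
  rewrite /c trajectS -(belast_traject par b) cat_cons.
  apply: (cycle_join e_sym ba).
  - exact: path_par.
  - exact: path_par.
  by rewrite !last_traject.
have cu : uniq c.
  have [au bu] : uniq (traject par a i.+2) /\ uniq (traject par b j.+1).
    by split; apply: traject_par_uniq; lia.
  rewrite cat_uniq rev_uniq au bu andbT; apply/hasPn => y.
  rewrite mem_rev => /trajectP[j' j'j ->]; apply/trajectP => -[i' i'i ij'].
  have [{}i'i|i'E] : i' < i.+1 \/ i' = i.+1 by lia.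
    have /imin : meets i' by apply/trajectP; exists j' => //; lia.
    lia.
  by move: ij'; rewrite i'E ij => /iter_par_inj; lia.
by have := e_acyc c3 cu; rewrite cc.
Qed.

Lemma edge_depth a b : e a b -> depth a != depth b.
Proof.
case/edge_parent/orP => /andP[xr /eqP <-]; have [_ ->] := par_spec xr.
  by rewrite neq_ltn ltnSn orbT.
by rewrite neq_ltn ltnSn.
Qed.

Definition in_subtree v u := exists i, iter i par u = v.

Lemma in_subtree_refl v : in_subtree v v.
Proof. by exists 0. Qed.

Lemma in_subtree_edge v w u : in_subtree v w -> w != v -> e w u -> in_subtree v u.
Proof.
move=> [i wv] wv' /edge_parent/orP[] /andP[_ /eqP pw].
  case: i wv => [/= wv|i wv]; first by rewrite wv eqxx in wv'.
  by exists i; rewrite -pw -iterSr.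
by exists i.+1; rewrite iterSr pw.
Qed.

Lemma in_subtree_depth_inj a b y :
  in_subtree a y -> in_subtree b y -> depth a = depth b -> a = b.
Proof.
move=> [i <-] [j <-] dij; have [ir|ir] := eqVneq (iter i par y) r.
  have : depth (iter j par y) == 0 by rewrite -dij ir depth_root.
  by rewrite depth_eq0 ir => /eqP.
move: ir dij; rewrite -depth_eq0 !depth_iter_par => ir dij; congr iter; lia.
Qed.

Lemma dist_le_exit_subtree v w z n :
  in_subtree v w -> ~ in_subtree v z -> dist_le e n w z ->
  exists n1 n2, [/\ n1 + n2 <= n, dist_le e n1 w v & dist_le e n2 v z].
Proof.
move=> vw vz [p [wp pz sp]]; elim: p w n vw wp pz sp => [|u p IHp] w n vw /= wp pz sp.
  by rewrite pz in vw.
have [<-|wv] := eqVneq w v.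
  by exists 0, n; split; [|apply: dist_le_refl|exists (u :: p)].
case/andP: wp => wu up.
have [n1 [n2 [sn wv' vz']]] := IHp u (size p) (in_subtree_edge vw wv wu) up pz (leqnn _).
by exists n1.+1, n2; split; [lia | apply: dist_le_cons wu wv' |].
Qed.

(* Two vertices hanging below distinct vertices [a], [b] of equal depth are far apart:
   every walk between them passes through [a] and [b], and [a], [b] are not adjacent. *)
Lemma fork_dist a b x y n : a != b -> depth a = depth b ->
  in_subtree a x -> in_subtree b y -> dist_le e n x y ->
  depth x + depth y + 2 <= n + depth a + depth b.
Proof.
move=> ab dab ax f_by xy.
have ay : ~ in_subtree a y by move=> ay; rewrite (in_subtree_depth_inj ay f_by dab) eqxx in ab.
have ba : ~ in_subtree b a.
  by move=> ba; rewrite (in_subtree_depth_inj (in_subtree_refl a) ba dab) eqxx in ab.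
have [n1 [n2 [n12 xa ay']]] := dist_le_exit_subtree ax ay xy.
have [n3 [n4 [n34 yb ba']]] := dist_le_exit_subtree f_by ba (dist_le_sym e_sym ay').
have n4_2 : 1 < n4.
  apply: dist_le_nonadj ba' _ _; first by rewrite eq_sym.
  by apply/negP => /edge_depth; rewrite dab eqxx.
have := depth_dist_le_sym xa; have := depth_dist_le_sym yb; lia.
Qed.

Definition anc_at x j := iter (depth x - j) par x.

Lemma depth_anc_at x j : j <= depth x -> depth (anc_at x j) = j.
Proof. by move=> jx; rewrite depth_iter_par subKn. Qed.

Lemma anc_at0 x : anc_at x 0 = r.
Proof. by rewrite /anc_at subn0 iter_par_depth. Qed.

Lemma iter_par_anc_at x i j : i <= j -> j <= depth x -> iter i par (anc_at x j) = anc_at x (j - i).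
Proof. by move=> ij jx; rewrite /anc_at -iterD; congr iter; lia. Qed.

Lemma in_subtree_anc_at x j : in_subtree (anc_at x j) x.
Proof. by exists (depth x - j). Qed.

Section Hubs.
Variable k : nat.
Hypothesis k_gt0 : 0 < k.

Definition child x c := (c != r) && (par c == x).
Definition height := \max_(x : V) depth x.

(* [pending x] is the height of the part of the subtree of [x] not yet covered by the
   hubs chosen below [x]; a non-root vertex becomes a hub as soon as this would reach [k].
   The recursion runs from the leaves up, so fuel [height.+1] suffices. *)
Fixpoint pending_rec n x :=
  if n is n'.+1 then
    let u := \max_(c | child x c) (pending_rec n' c).+1 in if k <= u then 0 else u
  else 0.
Definition pending x := pending_rec height.+1 x.
Definition pending_up x := \max_(c | child x c) (pending c).+1.
Definition hub x := (x != r) && (k <= pending_up x).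

Lemma child_depth x c : child x c -> depth c = (depth x).+1.
Proof. by case/andP=> cr /eqP <-; have [] := par_spec cr. Qed.

Lemma child_par x : x != r -> child (par x) x.
Proof. by rewrite /child eqxx andbT. Qed.

Lemma depth_le_height x : depth x <= height.
Proof. exact: (leq_bigmax (F := depth)). Qed.

Lemma pending_rec_stable n x : height - depth x < n -> pending_rec n x = pending_rec n.+1 x.
Proof.
elim: n x => [//|n IHn] x xn /=; rewrite (eq_bigr (fun c => (pending_rec n.+1 c).+1)) //.
move=> c /child_depth cx; rewrite IHn //; have := depth_le_height c; lia.
Qed.

Lemma pendingE x : pending x = if k <= pending_up x then 0 else pending_up x.
Proof.
rewrite /pending /pending_up /=; rewrite (eq_bigr (fun c => (pending_rec height.+1 c).+1)) //.
move=> c /child_depth cx; rewrite pending_rec_stable //; have := depth_le_height c; lia.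
Qed.

Lemma pending_lt x : pending x < k.
Proof. by rewrite pendingE; case: (leqP k (pending_up x)). Qed.

Lemma pending_up_le x : pending_up x <= k.
Proof. by apply/bigmax_leqP => c _; apply: pending_lt. Qed.

Lemma pending_up_child x c : child x c -> (pending c).+1 <= pending_up x.
Proof. exact: (@leq_bigmax_cond _ (child x) (fun c => (pending c).+1)). Qed.

Lemma pending_up_argmax x :
  0 < pending_up x -> exists2 c, child x c & (pending c).+1 = pending_up x.
Proof.
case: (pickP (child x)) => [c0 xc0 | none]; last by rewrite /pending_up big_pred0.
have xpos : 0 < #|child x| by apply/card_gt0P; exists c0.
have [c xc cmax] := eq_bigmax_cond (fun c => (pending c).+1) xpos.
by exists c => //; apply: esym cmax.
Qed.

Lemma pending_nonhub x : x != r -> ~~ hub x -> pending x = pending_up x.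
Proof. by rewrite /hub pendingE => -> /=; case: (leqP k (pending_up x)). Qed.

Lemma hub_root : ~~ hub r.
Proof. by rewrite /hub eqxx. Qed.

Lemma hub_pending_up x : hub x -> pending_up x = k.
Proof. by case/andP=> _ kx; apply/eqP; rewrite eqn_leq kx pending_up_le. Qed.

Lemma pending_up_iter_par x j : 0 < j <= depth x ->
  (forall l, 0 < l < j -> ~~ hub (iter l par x)) -> j <= pending_up (iter j par x).
Proof.
elim: j => [//|j IHj] jx nohub.
have jr : iter j par x != r by rewrite -depth_eq0 depth_iter_par; lia.
apply: leq_trans (pending_up_child (child_par jr)).
case: j IHj jx nohub jr => [//|j] IHj jx nohub jr.
have nohub_j : ~~ hub (iter j.+1 par x) by apply: nohub; lia.
rewrite pending_nonhub // ltnS; apply: IHj => [|l lj]; first lia.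
by apply: nohub; lia.
Qed.

Lemma hub_within x : k < depth x -> exists2 l, 0 < l <= k & hub (iter l par x).
Proof.
move=> kx.
have [/existsP[l /andP[l0 hl]]|/existsPn nohub] :=
  boolP [exists l : 'I_k, (0 < l) && hub (iter l par x)].
  by exists l; rewrite // l0 ltnW.
exists k; first by rewrite k_gt0 leqnn.
apply/andP; split; first by rewrite -depth_eq0 depth_iter_par; lia.
apply: pending_up_iter_par => [|l /andP[l0 lk]]; first by rewrite k_gt0 ltnW.
by have := nohub (Ordinal lk); rewrite /= l0.
Qed.

Lemma pending_chain x i : hub x -> 0 < i <= k -> exists z,
  [/\ iter i par z = x, depth z = depth x + i, pending z = k - i &
      forall l, 0 < l < i -> ~~ hub (iter l par z)].
Proof.
move=> hx; elim: i => [//|[|i] IHi] ik.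
  have [|c /andP[cr /eqP cx] pc] := pending_up_argmax (x:=x); first by rewrite hub_pending_up.
  exists c; split=> //; [by have [_ ->] := par_spec cr; rewrite cx addn1 | | by case=> [|[]]].
  by rewrite hub_pending_up // in pc; lia.
have [z [zx dz pz nohub]] := IHi (ltac:(lia)).
have zr : z != r by rewrite -depth_eq0 dz addnS.
have hz : ~~ hub z.
  by apply/negP => /hub_pending_up kz; move: pz; rewrite pendingE kz leqnn; lia.
have [|c /andP[cr /eqP cz] pc] := pending_up_argmax (x:=z).
  by rewrite -pending_nonhub //; lia.
exists c; split.
- by rewrite iterSr cz.
- by have [_ ->] := par_spec cr; rewrite cz dz !addnS.
- by rewrite -pending_nonhub // pz in pc; lia.
- case=> [//|[_|l /andP[_ li]]]; first by rewrite /= cz.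
  by rewrite iterSr cz nohub //; lia.
Qed.

(* Distance from [x] to its nearest proper hub ancestor; [(depth x).+1] if there is none. *)
Definition hub_gap x := (find (fun l => hub (iter l par x)) (iota 1 (depth x))).+1.

Lemma hub_gap_gt0 x : 0 < hub_gap x.
Proof. by []. Qed.

Lemma hub_gap_min x l : 0 < l < hub_gap x -> ~~ hub (iter l par x).
Proof.
case: l => [//|l]; rewrite /hub_gap ltnS => lx; have lsize : l < depth x.
  by move: (find_size (fun l => hub (iter l par x)) (iota 1 (depth x))); rewrite size_iota; lia.
by have := before_find 0 lx; rewrite /= nth_iota // add1n => ->.
Qed.

Lemma hub_gap_hub x : hub_gap x <= depth x -> hub (iter (hub_gap x) par x).
Proof.
move=> gx; have := @nth_find _ 0 (fun l => hub (iter l par x)) (iota 1 (depth x)).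
by rewrite has_find size_iota nth_iota ?add1n //; apply.
Qed.

Lemma hub_gap_le x l : 0 < l -> hub (iter l par x) -> hub_gap x <= l.
Proof. by move=> l0 hl; rewrite leqNgt; apply: contraL hl => lx; rewrite hub_gap_min ?l0. Qed.

Lemma hub_gap_eq x i : 0 < i <= depth x -> hub (iter i par x) ->
  (forall l, 0 < l < i -> ~~ hub (iter l par x)) -> hub_gap x = i.
Proof.
move=> /andP[i0 ix] hi nohub; have gi := hub_gap_le i0 hi.
apply/eqP; rewrite eqn_leq gi leqNgt; apply/negP => gi'.
have gx : hub_gap x <= depth x by apply: leq_trans (ltnW gi') ix.
by have := hub_gap_hub gx; rewrite (negbTE (nohub _ _)) // gi' andbT.
Qed.

Lemma hub_gap_le_k x : hub_gap x <= depth x -> hub_gap x <= k.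
Proof.
move=> gx; case: (leqP (depth x) k) => [xk|/hub_within[l /andP[l0 lk] hl]].
  exact: leq_trans gx xk.
exact: leq_trans (hub_gap_le l0 hl) lk.
Qed.

Lemma hub_descendant x i : hub x -> 0 < i <= k ->
  exists z, [/\ iter i par z = x, depth z = depth x + i & hub_gap z = i].
Proof.
move=> hx ik; have [z [zx dz _ nohub]] := pending_chain hx ik.
by exists z; split=> //; apply: hub_gap_eq; rewrite ?zx //; lia.
Qed.

Section DiametralPath.
Variables (y : V) (D : nat).
Hypotheses (depth_y : depth y = D) (k_lt_D : k < D).
Hypothesis ecc_y : forall x, exists2 n, dist_le e n x y & n <= D.

Lemma spine_hub : exists2 j, 0 < j <= k & hub (anc_at y j).
Proof.
have ky : k.+1 <= depth y by rewrite depth_y.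
have [|l /andP[l0 lk]] := @hub_within (anc_at y k.+1); first by rewrite depth_anc_at.
rewrite iter_par_anc_at // => [hl|]; last lia.
by exists (k.+1 - l) => //; lia.
Qed.

Lemma exists_spine_hub : exists j, (0 < j) && hub (anc_at y j).
Proof. by have [j /andP[j0 _] hj] := spine_hub; exists j; rewrite j0. Qed.

Definition top_level := ex_minn exists_spine_hub.
Definition top_hub := anc_at y top_level.

Lemma top_level_spec : [/\ 0 < top_level, top_level <= k, hub top_hub &
  forall j, 0 < j < top_level -> ~~ hub (anc_at y j)].
Proof.
rewrite /top_hub /top_level; case: ex_minnP => p /andP[p0 hp] pmin.
split=> // [|j /andP[j0 jp]]; last by apply/negP => hj; have := pmin j; rewrite j0 hj; lia.
by have [j /andP[j0 jk] hj] := spine_hub; apply: leq_trans (pmin j _) jk; rewrite j0.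
Qed.

Lemma top_level_le_depth : top_level <= depth y.
Proof. by case: top_level_spec; rewrite depth_y; lia. Qed.

Lemma depth_top_hub : depth top_hub = top_level.
Proof. exact/depth_anc_at/top_level_le_depth. Qed.

Lemma hub_top_hub : hub top_hub.
Proof. by case: top_level_spec. Qed.

Lemma top_hub_gap : depth top_hub < hub_gap top_hub.
Proof.
rewrite ltnNge; apply/negP => gt; have := hub_gap_hub gt.
move: gt; rewrite depth_top_hub [X in iter _ par X]/top_hub.
move=> gt; rewrite iter_par_anc_at ?top_level_le_depth //.
case: top_level_spec => _ _ _ nohub.
have [->|g] := posnP (top_level - hub_gap top_hub); first by rewrite anc_at0 (negbTE hub_root).
by apply/negP/nohub; have := hub_gap_gt0 top_hub; rewrite g; lia.
Qed.

Definition hub_par x := if hub_gap x <= depth x then iter (hub_gap x) par x else top_hub.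

Definition hub_rank x :=
  if x == top_hub then 0 else if hub_gap x <= depth x then (depth x).+2 else 1.

Lemma hub_par_top : hub_par top_hub = top_hub.
Proof. by rewrite /hub_par leqNgt top_hub_gap. Qed.

Lemma hub_hub_par x : hub (hub_par x).
Proof. by rewrite /hub_par; case: ifP => [/hub_gap_hub|_] //; apply: hub_top_hub. Qed.

Lemma hub_rank_par x : x != top_hub -> hub_rank (hub_par x) < hub_rank x.
Proof.
rewrite /hub_rank => /negbTE ->; case gx: (hub_gap x <= depth x); rewrite /hub_par gx ?eqxx //.
have : depth (iter (hub_gap x) par x) < depth x.
  by rewrite depth_iter_par; have := hub_gap_gt0 x; lia.
by move=> lt; case: ifP => _ //; case: ifP => _; lia.
Qed.

Lemma branch_off_spine x q : q < D -> q < depth x ->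
  anc_at x q.+1 != anc_at y q.+1 -> depth x - q <= q.
Proof.
move=> qD qx neq; have [n xy nD] := ecc_y x.
have := fork_dist neq _ (in_subtree_anc_at x q.+1) (in_subtree_anc_at y q.+1) xy.
by rewrite !depth_anc_at ?depth_y //; move=> /(_ erefl); lia.
Qed.

(* If [x] leaves the diametral path at depth [q < top_level], it is within
   [(depth x - q) + (top_level - q) <= top_level <= k] of [top_hub]. *)
Lemma dist_le_top_hub x : depth x < hub_gap x -> dist_le e k x top_hub.
Proof.
move=> nohub; case: top_level_spec => p0 pk _ _.
have pD : top_level <= depth y by rewrite depth_y; apply: leq_trans pk (ltnW k_lt_D).
pose meet j := [&& j <= depth x, j <= D & anc_at x j == anc_at y j].
have meet0 : meet 0 by rewrite /meet !anc_at0 eqxx.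
have meetD j : meet j -> j <= D by case/and3P.
have [q /and3P[qx qD /eqP xyq] qmax] := ex_maxnP (ex_intro meet 0 meet0) meetD.
have [pq|qp] := leqP top_level q.
  have xp : anc_at x top_level = top_hub.
    by rewrite /top_hub -(subKn pq) -!iter_par_anc_at ?xyq ?depth_y ?leq_subr.
  have [xtop|] := eqVneq (depth x) top_level.
    by rewrite -xp /anc_at xtop subnn; apply: dist_le_leq (dist_le_refl _ _).
  move=> xtop; have := @hub_gap_le x (depth x - top_level).
  by rewrite -[iter _ par x]/(anc_at x _) xp hub_top_hub; lia.
have branch : depth x - q <= q.
  have [->|xq] := eqVneq q (depth x); first by rewrite subnn.
  have qD' : q < D by apply: leq_trans qp (leq_trans pk (ltnW k_lt_D)).
  apply: (branch_off_spine qD'); first by rewrite ltn_neqAle xq.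
  by apply/negP => xyq1; have := qmax q.+1; rewrite /meet xyq1 qD' andbT; lia.
have x_q : dist_le e (depth x - q) x (anc_at x q) := dist_le_sym e_sym (dist_le_iter_par _ x).
have q_top : dist_le e (top_level - q) (anc_at x q) top_hub.
  have -> : anc_at x q = iter (top_level - q) par top_hub.
    by rewrite xyq iter_par_anc_at ?leq_subr // subKn // ltnW.
  exact: dist_le_iter_par.
by apply: dist_le_leq (dist_le_cat x_q q_top); lia.
Qed.

Lemma dist_le_hub_par x : dist_le e k x (hub_par x).
Proof.
rewrite /hub_par; case: (leqP (hub_gap x) (depth x)) => [gx|]; last exact: dist_le_top_hub.
exact: dist_le_leq (hub_gap_le_k gx) (dist_le_sym e_sym (dist_le_iter_par _ x)).
Qed.

Lemma hub_children x : hub x -> exists s : seq V,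
  [/\ uniq s, size s = k & {in s, forall z, hub_par z = x /\ depth x < depth z}].
Proof.
move=> hx; pose z i := odflt x [pick z | (depth z == depth x + i) && (hub_par z == x)].
have zP i : 0 < i <= k -> depth (z i) = depth x + i /\ hub_par (z i) = x.
  move=> ik; rewrite /z; case: pickP => [w /andP[/eqP -> /eqP ->] // | none].
  have [w [wx dw gw]] := hub_descendant hx ik.
  have := none w; rewrite /= dw eqxx /hub_par gw ifT ?wx ?eqxx //; lia.
exists [seq z i | i <- iota 1 k]; split; last 2 first.
- by rewrite size_map size_iota.
- move=> w /mapP[i]; rewrite mem_iota => ik ->; have [-> ->] := zP i (ltac:(lia)).
  by split=> //; lia.
rewrite map_inj_in_uniq ?iota_uniq // => i j; rewrite !mem_iota => ik jk /(congr1 depth).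
by have [-> _] := zP i (ltac:(lia)); have [-> _] := zP j (ltac:(lia)); lia.
Qed.

Definition hub_tree := parent_graph hub_par.

Lemma hub_tree_spanning : spanning_tree_of (power_adj e k) hub_tree.
Proof.
split; first exact: (parent_graph_tree hub_par_top hub_rank_par).
move=> a b /andP[ab abE]; split=> //; case/orP: abE => /eqP <-.
  exact: dist_le_hub_par.
exact: (dist_le_sym e_sym (dist_le_hub_par b)).
Qed.

Lemma hub_tree_branching : branching_plus k.+1 hub_tree.
Proof.
move=> x leaf; have [hx|nhx] := boolP (hub x); last first.
  have xtop : x != top_hub by apply: contraNneq nhx => ->; apply: hub_top_hub.
  move: leaf; rewrite (parent_graph_leaf hub_rank_par xtop) // => z.
  by apply: contraNneq nhx => <-; apply: hub_hub_par.
have [s [su sk sx]] := hub_children hx.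
have r_top : hub_par r = top_hub by rewrite /hub_par depth_root leqNgt hub_gap_gt0.
have r_ne_top : r != top_hub by rewrite eq_sym -depth_eq0 depth_top_hub; case: top_level_spec; lia.
pose w := if x == top_hub then r else hub_par x.
have xw : hub_tree x w.
  rewrite /w; case: (eqVneq x top_hub) => [->|xtop]; first exact: parent_graph_child.
  exact: (parent_graph_up hub_rank_par).
have ws : w \notin s.
  rewrite /w; case: (eqVneq x top_hub) => [_|xtop]; apply/negP => /sx[].
    by rewrite depth_root.
  move/(up_up hub_par_top hub_rank_par) => xx _.
  by have := up_neq hub_rank_par xtop; rewrite xx eqxx.
rewrite -sk; apply: (deg_ge_uniq (s := w :: s)); first by rewrite /= ws su.
move=> z; rewrite inE => /predU1P[->|zs] //; have [zx xz] := sx z zs.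
by apply: parent_graph_child zx; apply: contraTneq xz => ->; rewrite ltnn.
Qed.

Lemma exists_branching_spanning_tree :
  exists f, spanning_tree_of (power_adj e k) f /\ branching_plus k.+1 f.
Proof. by exists hub_tree; split; [apply: hub_tree_spanning | apply: hub_tree_branching]. Qed.

End DiametralPath.
End Hubs.
End RootedTree.

Theorem mainTheorem1 (V : finType) (e : rel V) (d k : nat) :
  is_tree e -> diameter_is e d -> 1 <= k -> k <= d - 1 ->
  exists f : rel V,
    spanning_tree_of (power_adj e k) f /\ branching_plus k.+1 f.
Proof.
move=> [[e_sym e_irr] [e_conn e_acyc]] [ecc [x [y [xy xy_min]]]] k_gt0 kd.
have depth_y : depth x e_conn y = d.
  by apply/eqP; rewrite eqn_leq depth_min //=; apply/xy_min/dist_le_depth.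
have ecc_y z : exists2 n, dist_le e n z y & n <= d by have [n [[]]] := ecc z y; exists n.
apply: (exists_branching_spanning_tree e_sym e_irr e_acyc k_gt0 depth_y _ ecc_y); lia.
Qed.
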